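(* Let $p$ be a prime, let $G$ be a finite Abelian $p$-group, and let $S$ be a sequence over $G$ with $|S|=\mathsf{D}(G)+i-1$, where $i\ge 1$ is an integer. Then: (i) If $i\ge 2$ and $S$ contains a zero-sum subsequence $S'$ with $p\nmid |S'|$, then $S$ is dispersive. (ii) If $S$ contains no non-empty zero-sum subsequence $S'$ with $p\mid |S'|$, then $i\le p-1$, and $S$ contains at least $i$ non-empty zero-sum subsequences with pairwise distinct lengths.
   Context: A sequence over a finite Abelian group $G$ (written additively) is a finite multiset of elements of $G$; its length $|S|$ is the number of terms counted with multiplicity, and a subsequence is a sub-multiset. A zero-sum sequence is one whose terms sum to $0$. The Davenport constant $\mathsf{D}(G)$ is the smallest positive integer $t$ such that every sequence over $G$ of length at least $t$ contains a non-empty zero-sum subsequence. A sequence $S$ over $G$ is dispersive if it contains two non-empty zero-sum subsequences $S_1,S_2$ with $|S_1|\neq|S_2|$. *)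

From HB Require Import structures.
From mathcomp Require Import all_boot all_order all_algebra.
Set Implicit Arguments. Unset Strict Implicit. Unset Printing Implicit Defensive.
Import GRing.Theory.
Local Open Scope ring_scope.

(* A sequence over G is a [seq G] (viewed as a multiset); its subsequences
   (sub-multisets) are the [mask m S] for bit masks m. *)

Definition zero_sum (G : zmodType) (T : seq G) : bool := \sum_(x <- T) x == 0.

Definition davenport_prop (G : zmodType) (t : nat) : Prop :=
  forall S : seq G, (t <= size S)%N ->
    exists m : bitseq, mask m S != [::] /\ zero_sum (mask m S).

Definition is_davenport (G : zmodType) (d : nat) : Prop :=
  (0 < d)%N /\ davenport_prop G d /\
  forall t : nat, (0 < t)%N -> davenport_prop G t -> (d <= t)%N.

Definition dispersive (G : zmodType) (S : seq G) : Prop :=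
  exists m1 m2 : bitseq,
    [/\ mask m1 S != [::], zero_sum (mask m1 S),
        mask m2 S != [::], zero_sum (mask m2 S)
      & size (mask m1 S) != size (mask m2 S)].

From HB Require Import structures.
From mathcomp Require Import all_boot all_order all_algebra all_fingroup all_solvable.
From mathcomp Require Import ring zify.
From Stdlib Require Import Classical FunctionalExtensionality.
Set Implicit Arguments. Unset Strict Implicit. Unset Printing Implicit Defensive.
Import GRing.Theory FinRing.Theory.
Local Open Scope ring_scope.

(* Let X^a act on functions G -> F_p by translation, so that [bdiff a] is the group-ring
   element 1 - X^a.  In characteristic p, (1 - X^x)^(p^n) = 1 - X^(p^n x); hence, for a
   p-group G = <x_1> (+) ... (+) <x_r>, every product of more than sum_j (#[x_j] - 1)
   factors 1 - X^g vanishes (some x_j must occur #[x_j] times once each g is written in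
   the basis), and sum_j (#[x_j] - 1) < D(G) because x_1^(#[x_1]-1) ... x_r^(#[x_r]-1) is
   zero-sum free.  Expanding such products along S against a polynomial weight phi of
   degree k with |S| >= D(G) + k gives
     sum over the zero-sum subsequences T of S of (-1)^|T| phi(|T|) = 0   in F_p.
   For phi(n) = prod_(l in L) (n - l) with L a list of fewer than i lengths prime to p,
   the empty subsequence contributes phi(0) <> 0, so some non-empty zero-sum subsequence
   has a length that is not congruent to any element of L.  Taking for L a single length,
   the residues 1, ..., p - 1, or the lengths found so far gives the three assertions. *)

Section Differences.
Variables (G : zmodType) (R : comNzRingType).
Implicit Types (a b x : G) (U : seq G) (f h : G -> R).

Definition bdiff a f : G -> R := fun g => f g - f (g - a).
Definition shiftf a f : G -> R := fun g => f (g - a).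
Definition bdiffs U f : G -> R := foldr bdiff f U.

Lemma bdiffC a b f : bdiff a (bdiff b f) = bdiff b (bdiff a f).
Proof.
by apply: functional_extensionality => g; rewrite /bdiff [g - a - b]addrAC; ring.
Qed.

Lemma bdiffs_bdiff U a f : bdiffs U (bdiff a f) = bdiff a (bdiffs U f).
Proof. by elim: U => //= b U ->; rewrite bdiffC. Qed.

Lemma bdiff_zero a : bdiff a (fun=> 0) = fun=> 0.
Proof. by apply: functional_extensionality => g; rewrite /bdiff subr0. Qed.

Lemma bdiffs_zero U : bdiffs U (fun=> 0) = fun=> 0.
Proof. by elim: U => //= b U ->; rewrite bdiff_zero. Qed.

Lemma bdiff0 f : bdiff 0 f = fun=> 0.
Proof. by apply: functional_extensionality => g; rewrite /bdiff subr0 subrr. Qed.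

Lemma bdiffD a b f : bdiff (a + b) f = fun g => bdiff a f g + shiftf a (bdiff b f) g.
Proof.
by apply: functional_extensionality => g; rewrite /bdiff /shiftf opprD addrA; ring.
Qed.

Lemma bdiffsB U f h : bdiffs U (fun g => f g - h g) = fun g => bdiffs U f g - bdiffs U h g.
Proof.
elim: U => //= a U ->; apply: functional_extensionality => g.
by rewrite /bdiff; ring.
Qed.

Lemma bdiffs_shiftf U a f : bdiffs U (shiftf a f) = shiftf a (bdiffs U f).
Proof.
elim: U => //= b U ->; apply: functional_extensionality => g.
by rewrite /bdiff /shiftf addrAC.
Qed.

Lemma bdiffs_count U x f :
  bdiffs U f = bdiffs [seq y <- U | y != x] (iter (count_mem x U) (bdiff x) f).
Proof.
elim: U => //= y U ->; have [->|//] := eqVneq y x.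
by rewrite /= add0n bdiffs_bdiff.
Qed.

Lemma iter_bdiff_zero n x : iter n (bdiff x) (fun=> 0) = fun=> 0.
Proof. by elim: n => //= n ->; rewrite bdiff_zero. Qed.

Lemma iter_bdiffE n x f g :
  iter n (bdiff x) f g = \sum_(0 <= k < n.+1) (-1) ^+ k * 'C(n, k)%:R * f (g - x *+ k).
Proof.
elim: n g => [|n IHn] g; first by rewrite big_nat1 /= subr0 expr0 !mul1r.
rewrite iterS {1}/bdiff !IHn [RHS]big_nat_recl // bin0 expr0 !mul1r subr0.
have -> : \sum_(0 <= k < n.+1) (-1) ^+ k.+1 * 'C(n.+1, k.+1)%:R * f (g - x *+ k.+1)
  = \sum_(0 <= k < n.+1) (-1) ^+ k.+1 * 'C(n, k.+1)%:R * f (g - x *+ k.+1)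
    - \sum_(0 <= k < n.+1) (-1) ^+ k * 'C(n, k)%:R * f (g - x - x *+ k).
  rewrite -sumrN -big_split; apply: eq_bigr => k _ /=.
  by rewrite binS natrD exprS mulrS opprD addrA; ring.
rewrite addrA; congr (_ - _).
rewrite [LHS]big_nat_recl // bin0 expr0 !mul1r subr0; congr (_ + _).
by rewrite [RHS]big_nat_recr //= bin_small // mulr0 mul0r addr0.
Qed.

Section Frobenius.
Variables (p : nat) (pcharRp : p \in [pchar R]).

(* All middle binomial coefficients vanish, and (-1)^p = -1 even when p = 2. *)
Lemma iter_bdiff_pchar x f : iter p (bdiff x) f = bdiff (x *+ p) f.
Proof.
have p_pr := pcharf_prime pcharRp.
have [q def_p] : exists q, p = q.+1 by exists p.-1; rewrite prednK ?prime_gt0.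
have pchar_q : q.+1 \in [pchar R] by rewrite -def_p.
apply: functional_extensionality => g; rewrite def_p in p_pr *.
rewrite iter_bdiffE big_nat_recl // big_nat_recr //= bin0 binn expr0 !mul1r mulr1 subr0.
rewrite big1_seq ?add0r; last first.
  move=> k /andP[_]; rewrite mem_iota add0n => /andP[_ kq].
  have /dvdnP[r ->] : (q.+1 %| 'C(q.+1, k.+1))%N.
    by apply: prime_dvd_bin => //; rewrite /= ltnS -(subn0 q).
  by rewrite natrM (pcharf0 pchar_q) !mulr0 mul0r.
rewrite /bdiff -signr_odd; congr (_ + _).
have [p2|odd_p] := even_prime p_pr; last by rewrite odd_p expr1 mulN1r.
suff N1E : (-1 : R) = 1 by rewrite N1E expr1n mul1r -mulN1r N1E mul1r.
by apply/eqP; rewrite -subr_eq0 -opprD oppr_eq0 -(pcharf0 pchar_q) p2.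
Qed.

Lemma iter_bdiff_expn n x f : iter (p ^ n) (bdiff x) f = bdiff (x *+ p ^ n) f.
Proof.
elim: n x f => [|n IHn] x f; first by rewrite expn0 mulr1n.
rewrite expnS iterM.
have -> : iter (p ^ n) (bdiff x) = bdiff (x *+ p ^ n).
  by apply: functional_extensionality => h; rewrite IHn.
by rewrite iter_bdiff_pchar -mulrnA mulnC.
Qed.

End Frobenius.
End Differences.

Lemma size_le_sum_bounded_counts (T : eqType) (b U : seq T) (ord : T -> nat) :
  all (mem b) U -> (forall x, x \in b -> count_mem x U < ord x)%N ->
  (size U <= \sum_(x <- b) (ord x).-1)%N.
Proof.
elim: b U => [|x b IHb] U; first by case: U.
move=> Ub ltU; rewrite big_cons -(count_predC (pred1 x) U) -[count (predC _) U]size_filter.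
apply: leq_add; first by move: (ltU x (mem_head _ _)); case: (ord x).
apply: IHb => [|y yb].
  apply/allP => y; rewrite mem_filter => /andP[/= yx yU].
  by move: (allP Ub y yU); rewrite inE => /orP[/eqP yx'|//]; rewrite yx' eqxx in yx.
apply: leq_ltn_trans (ltU y _); last by rewrite inE yb orbT.
exact/leq_count_subseq/filter_subseq.
Qed.

Section Annihilation.
Variables (G : zmodType) (R : comNzRingType) (p : nat) (b : seq G) (ord : G -> nat).
Hypotheses (pcharRp : p \in [pchar R])
  (ord_b : forall x, x \in b -> exists n, ord x = (p ^ n)%N /\ x *+ ord x = 0)
  (b_gen : forall g, exists L, all (mem b) L /\ g = \sum_(y <- L) y).

Lemma bdiffs_basis_eq0 U (f : G -> R) :
  all (mem b) U -> (\sum_(x <- b) (ord x).-1 < size U)%N -> bdiffs U f = fun=> 0.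
Proof.
move=> Ub ltU.
have [/hasP[x xb le_ord]|/hasPn small] := boolP (has (fun x => ord x <= count_mem x U)%N b).
  have [n [ordx xord0]] := ord_b xb.
  rewrite (bdiffs_count U x) -(subnK le_ord) iterD ordx iter_bdiff_expn // -ordx.
  by rewrite xord0 bdiff0 iter_bdiff_zero bdiffs_zero.
move: ltU; rewrite ltnNge (size_le_sum_bounded_counts Ub) // => y /small.
by rewrite ltnNge.
Qed.

Lemma bdiffs_eq0 W U (f : G -> R) : all (mem b) U ->
  (\sum_(x <- b) (ord x).-1 < size W + size U)%N -> bdiffs W (bdiffs U f) = fun=> 0.
Proof.
elim: W U f => [|w W IHW] U f Ub /= ltWU; first exact: bdiffs_basis_eq0.
have [L [Lb ->]] := b_gen w.
elim: L Lb => [|y L IHL] /=; first by rewrite big_nil bdiff0.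
case/andP=> yb Lb; rewrite big_cons bdiffD IHL //.
apply: functional_extensionality => g; rewrite /shiftf addr0 -bdiffs_bdiff.
have -> : bdiff y (bdiffs U f) = bdiffs (y :: U) f by [].
by rewrite IHW //= ?yb // addnS -addSn.
Qed.

End Annihilation.

Lemma mask_cat_take_drop (T : Type) (m : bitseq) (s1 s2 : seq T) :
  mask m (s1 ++ s2) = mask (take (size s1) m) s1 ++ mask (drop (size s1) m) s2.
Proof. by elim: s1 m => [|x s1 IHs] [|[] m] //=; rewrite IHs. Qed.

Section CyclicDecomposition.
Variable G : finZmodType.
Implicit Types (b L : seq G) (K : {group G}).

Lemma sum_mem_group K L : all (mem K) L -> \sum_(y <- L) y \in K.
Proof.
elim: L => [|y L IHL] /=; first by rewrite big_nil -zmod1gE group1.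
by case/andP=> yK LK; rewrite big_cons -zmodMgE groupM // IHL.
Qed.

Lemma bigdprod_cycles_sub b K : \big[dprod/1%g]_(x <- b) <[x]>%g = K -> {subset b <= K}.
Proof.
move/bigdprodWY=> <- y yb; apply: mem_gen; rewrite bigcup_seq.
by apply/bigcupP; exists y => //; apply: cycle_id.
Qed.

Lemma bigdprod_cycles_sum b K g : \big[dprod/1%g]_(x <- b) <[x]>%g = K -> g \in K ->
  exists L, all (mem b) L /\ g = \sum_(y <- L) y.
Proof.
elim: b K g => [|x b IHb] K g; first by rewrite big_nil => <-; rewrite in_set1 => /eqP ->; exists [::]; rewrite big_nil.
rewrite big_cons => /dprodP[[_ H _ defH] <- _ _] /mulsgP[_ h /cycleP[n ->] hH ->].
rewrite defH in hH; have [L [Lb ->]] := IHb H h defH hH.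
exists (nseq n x ++ L); split.
  rewrite all_cat all_nseq (_ : mem (x :: b) x) ?orbT /=; last exact: mem_head.
  by apply: sub_all Lb => y /= yb; rewrite inE yb orbT.
by rewrite big_cat big_nseq iter_addr_0.
Qed.

Definition basis_seq b : seq G := flatten [seq nseq #[x]%g.-1 x | x <- b].

Lemma size_basis_seq b : size (basis_seq b) = \sum_(x <- b) #[x]%g.-1.
Proof. by elim: b => [|x b IHb]; rewrite ?big_nil // big_cons size_cat size_nseq IHb. Qed.

Lemma basis_seq_zero_sum_free b K m : \big[dprod/1%g]_(x <- b) <[x]>%g = K ->
  zero_sum (mask m (basis_seq b)) -> mask m (basis_seq b) = [::].
Proof.
elim: b K m => [|x b IHb] K m; first by rewrite /= mask0.
rewrite big_cons => /dprodP[[_ H _ defH] _ _ tixH].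
rewrite [basis_seq _]/= mask_cat_take_drop /zero_sum big_cat /=.
set T1 := mask _ _; set T2 := mask _ (basis_seq b) => zsT.
have T1E : T1 = nseq (size T1) x.
  apply/all_pred1P/allP => y /mem_mask; rewrite mem_nseq => /andP[_ /eqP ->].
  by rewrite /= eqxx.
have sumT1 : \sum_(y <- T1) y = x *+ size T1 by rewrite {1}T1E big_nseq iter_addr_0.
have ltT1 : (size T1 < #[x]%g)%N.
  rewrite (leq_ltn_trans (size_subseq (mask_subseq _ _))) // size_nseq.
  by rewrite prednK ?order_gt0.
have sumT2_H : \sum_(y <- T2) y \in H.
  apply/sum_mem_group/allP => y /mem_mask /flattenP[_ /mapP[z zb ->]].
  by rewrite mem_nseq => /andP[_ /eqP ->]; apply: bigdprod_cycles_sub defH z zb.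
have sumT2_x : \sum_(y <- T2) y \in <[x]>%g.
  have -> : \sum_(y <- T2) y = ((x ^+ size T1)^-1)%g.
    by apply/eqP; rewrite zmodVgE zmodXgE -sumT1 -addr_eq0 addrC.
  by rewrite groupV mem_cycle.
have sumT2_0 : \sum_(y <- T2) y = 0.
  by apply/set1P; rewrite -[[set _]]/(1%g : {set G}) -tixH inE sumT2_x defH.
have xT1 : (x ^+ size T1)%g = 1%g by move: zsT; rewrite sumT2_0 addr0 sumT1 => /eqP.
have size_T1 : size T1 = 0%N.
  apply/eqP; apply: contraTT ltT1; rewrite -lt0n -leqNgt => T1_gt0.
  by apply: dvdn_leq T1_gt0 _; rewrite order_dvdn xT1.
by rewrite T1E size_T1; apply: IHb defH _; rewrite /zero_sum sumT2_0.
Qed.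

Lemma davenport_gt_sum_orders D b : davenport_prop G D ->
  \big[dprod/1%g]_(x <- b) <[x]>%g = [set: G] -> (\sum_(x <- b) #[x]%g.-1 < D)%N.
Proof.
move=> davD defG; rewrite ltnNge -size_basis_seq; apply/negP => /davD[m [nz_m zs_m]].
by move: nz_m; rewrite (basis_seq_zero_sum_free defG zs_m).
Qed.

End CyclicDecomposition.

Lemma bdiffs_pgroup_eq0 (G : finZmodType) (R : comNzRingType) p D (U : seq G) (f : G -> R) :
  p \in [pchar R] -> p.-nat #|G| -> davenport_prop G D -> (D <= size U)%N ->
  bdiffs U f = fun=> 0.
Proof.
move=> pcharRp pG davD le_DU.
have [b defG _] := abelian_structure (zmod_abelian [set: G]).
have ord_b x : x \in b -> exists n, #[x]%g = (p ^ n)%N /\ x *+ #[x]%g = 0.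
  move=> _; exists (logn p #[x]%g); split; last by rewrite -zmodXgE expg_order.
  have px : p.-nat #[x]%g by apply: pnat_dvd (order_dvdG (in_setT x)) _; rewrite cardsT.
  by rewrite -p_part part_pnat_id.
have b_gen g : exists L, all (mem b) L /\ g = \sum_(y <- L) y.
  exact: bigdprod_cycles_sum defG (in_setT g).
have := bdiffs_eq0 (W := U) (U := [::]) pcharRp ord_b b_gen f isT.
by rewrite addn0; apply; apply: leq_trans (davenport_gt_sum_orders davD defG) le_DU.
Qed.

Section SignedSums.
Variables (G : zmodType) (R : comNzRingType).
Implicit Types (W U : seq G) (phi psi : nat -> R).

(* signed_sum W phi g is the sum of (-1)^|T| * phi |T| over the subsequences T of W summing to g. *)
Fixpoint signed_sum W phi : G -> R :=
  if W is w :: W' then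
    fun g => signed_sum W' phi g - signed_sum W' (fun n => phi n.+1) (g - w)
  else fun g => (g == 0)%:R * phi 0%N.

Definition fdiff phi : nat -> R := fun n => phi n.+1 - phi n.

(* deg_lt j phi: phi is a polynomial function of degree less than j. *)
Fixpoint deg_lt j phi : Prop :=
  if j is j'.+1 then deg_lt j' (fdiff phi) else forall n, phi n = 0.

Lemma signed_sumB W phi psi :
  signed_sum W (fun n => phi n - psi n) = fun g => signed_sum W phi g - signed_sum W psi g.
Proof.
elim: W phi psi => [|w W IHW] phi psi; apply: functional_extensionality => g /=.
  by rewrite mulrBr.
by rewrite IHW (IHW (fun n => phi n.+1)); ring.
Qed.

Lemma signed_sum_eq0 W phi : (forall n, phi n = 0) -> signed_sum W phi = fun=> 0.
Proof.
elim: W phi => [|w W IHW] phi phi0; apply: functional_extensionality => g /=.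
  by rewrite phi0 mulr0.
by rewrite !IHW // subr0.
Qed.

Lemma signed_sum_cons w W phi : signed_sum (w :: W) phi =
  fun g => bdiff w (signed_sum W phi) g - shiftf w (signed_sum W (fdiff phi)) g.
Proof.
by apply: functional_extensionality => g /=; rewrite signed_sumB /bdiff /shiftf; ring.
Qed.

Lemma signed_sum_ext W phi psi g :
  (forall m, \sum_(x <- mask m W) x = g -> phi (size (mask m W)) = psi (size (mask m W))) ->
  signed_sum W phi g = signed_sum W psi g.
Proof.
elim: W phi psi g => [|w W IHW] phi psi g eq_phi /=.
  have [g0|] := eqVneq g 0; last by rewrite !mul0r.
  by rewrite (eq_phi [::]) // big_nil g0.
congr (_ - _); apply: IHW => m sum_m; first exact: (eq_phi (false :: m)).
by apply: (eq_phi (true :: m)); rewrite /= big_cons sum_m addrC subrK.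
Qed.

Lemma signed_sum_delta W (c : R) g :
  signed_sum W (fun n => if n == 0%N then c else 0) g = (g == 0)%:R * c.
Proof. by elim: W g => [|w W IHW] g //=; rewrite IHW signed_sum_eq0 // subr0. Qed.

Lemma signed_sum_nonempty_eq0 W phi :
  (forall m, mask m W != [::] -> zero_sum (mask m W) -> phi (size (mask m W)) = 0) ->
  signed_sum W phi 0 = phi 0%N.
Proof.
move=> phi0; rewrite (@signed_sum_ext W phi (fun n => if n == 0%N then phi 0%N else 0)).
  by rewrite signed_sum_delta eqxx mul1r.
move=> m /eqP zs_m; case: eqP => [->//|/eqP nz_m].
by apply: phi0 => //; apply: contra nz_m => /eqP ->.
Qed.

Lemma deg_ltD j phi psi : deg_lt j phi -> deg_lt j psi -> deg_lt j (fun n => phi n + psi n).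
Proof.
elim: j phi psi => [|j IHj] phi psi /=; first by move=> phi0 psi0 n; rewrite phi0 psi0 addr0.
move=> /IHj dphi /dphi; congr deg_lt; apply: functional_extensionality => n.
by rewrite /fdiff; ring.
Qed.

Lemma deg_ltS j phi : deg_lt j phi -> deg_lt j.+1 phi.
Proof.
elim: j phi => [|j IHj] phi /=; last exact: IHj.
by move=> phi0 n; rewrite /fdiff !phi0 subr0.
Qed.

Lemma deg_lt_shift j phi : deg_lt j phi -> deg_lt j (fun n => phi n.+1).
Proof.
case: j => [|j] /=; first by move=> phi0 n; rewrite phi0.
move=> dphi; have := deg_ltD (deg_ltS dphi) dphi.
by congr deg_lt; apply: functional_extensionality => n; rewrite /fdiff; ring.
Qed.

Lemma deg_lt1_const (c : R) : deg_lt 1 (fun=> c).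
Proof. by move=> n; rewrite /fdiff subrr. Qed.

Lemma deg_lt_mul_linear j phi (a : R) :
  deg_lt j phi -> deg_lt j.+1 (fun n => (n%:R + a) * phi n).
Proof.
elim: j phi => [|j IHj] phi /=; first by move=> phi0 n; rewrite /fdiff !phi0 !mulr0 subr0.
move=> dphi; have := deg_ltD (IHj _ dphi) (deg_lt_shift (dphi : deg_lt j.+1 phi)).
by congr deg_lt; apply: functional_extensionality => n; rewrite /fdiff -natr1; ring.
Qed.

Lemma deg_lt_prod_sub (s : seq nat) :
  deg_lt (size s).+1 (fun n => \prod_(l <- s) (n%:R - l%:R)).
Proof.
elim: s => [|l s IHs] /=.
  by have := deg_lt1_const 1; congr deg_lt; apply: functional_extensionality => n; rewrite big_nil.
have := deg_lt_mul_linear (- l%:R) IHs; congr deg_lt.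
by apply: functional_extensionality => n; rewrite big_cons.
Qed.

Section Vanishing.
Variable D : nat.
Hypothesis bdiffs_long_eq0 : forall U (f : G -> R), (D <= size U)%N -> bdiffs U f = fun=> 0.

(* Induction on W via signed_sum_cons: the bdiff w term lengthens U, the fdiff term lowers the degree. *)
Lemma bdiffs_signed_sum_eq0 W j U phi : deg_lt j.+1 phi ->
  (D + j <= size U + size W)%N -> bdiffs U (signed_sum W phi) = fun=> 0.
Proof.
elim: W j U phi => [|w W IHW] j U phi dphi le_DUW.
  by apply: bdiffs_long_eq0; rewrite addn0 in le_DUW; apply: leq_trans (leq_addr _ _) le_DUW.
rewrite signed_sum_cons bdiffsB.
have -> : bdiffs U (bdiff w (signed_sum W phi)) = fun=> 0.
  by rewrite bdiffs_bdiff; apply: (IHW j (w :: U)); rewrite //= addSn -addnS.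
have -> : bdiffs U (shiftf w (signed_sum W (fdiff phi))) = fun=> 0.
  rewrite bdiffs_shiftf; case: j dphi le_DUW => [|j] dphi le_DUW.
    by rewrite signed_sum_eq0 // bdiffs_zero.
  by rewrite (IHW j U) //; rewrite /= !addnS ltnS in le_DUW.
by apply: functional_extensionality => g; rewrite subr0.
Qed.

End Vanishing.
End SignedSums.

Lemma signed_sum_pgroup_eq0 (G : finZmodType) (R : comNzRingType) p D (W : seq G) k
    (phi : nat -> R) :
  p \in [pchar R] -> p.-nat #|G| -> davenport_prop G D ->
  deg_lt k.+1 phi -> (D + k <= size W)%N -> signed_sum W phi = fun=> 0.
Proof.
move=> pcharRp pG davD dphi le_DW.
have long_eq0 U (f : G -> R) : (D <= size U)%N -> bdiffs U f = fun=> 0.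
  exact: bdiffs_pgroup_eq0 pcharRp pG davD.
exact: (bdiffs_signed_sum_eq0 long_eq0 (U := [::]) dphi).
Qed.

Lemma Fp_natr_eq p m n : prime p -> ((m%:R : 'F_p) == n%:R) = (m == n %[mod p]).
Proof. by move=> p_pr; rewrite -val_eqE /= !val_Fp_nat. Qed.

Local Close Scope ring_scope.

Section ZeroSumLengths.
Variables (p : nat) (G : finZmodType) (D i : nat) (S : seq G).
Hypotheses (p_pr : prime p) (pG : p.-nat #|G|) (davD : davenport_prop G D)
  (size_S : size S = D + i - 1).

Lemma zero_sum_length_avoiding (ls : seq nat) :
  size ls < i -> all (fun l => ~~ (p %| l)) ls ->
  exists m, [/\ mask m S != [::], zero_sum (mask m S)
              & ~~ has (fun l => size (mask m S) == l %[mod p]) ls].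
Proof.
move=> lt_ls_i coprime_ls; apply: NNPP => no_m.
have le_DS : D + size ls <= size S by rewrite size_S; lia.
have /(congr1 (fun h => h 0%R)) :=
  signed_sum_pgroup_eq0 (pchar_Fp p_pr) pG davD (deg_lt_prod_sub _ ls) le_DS.
rewrite signed_sum_nonempty_eq0 => [/eqP|m nz_m zs_m].
  rewrite prodf_seq_eq0 => /hasP[l ls_l]; rewrite sub0r oppr_eq0 -[0%R]/(0%:R : 'F_p)%R.
  by rewrite Fp_natr_eq // mod0n; apply/negP: (allP coprime_ls l ls_l).
apply/eqP; rewrite prodf_seq_eq0; apply/negPn/negP => /hasPn miss.
apply: no_m; exists m; split=> //; apply/hasPn => l /miss.
by rewrite subr_eq0 Fp_natr_eq.
Qed.

Lemma dispersive_of_coprime_zero_sum : 2 <= i ->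
  (exists m, zero_sum (mask m S) /\ ~~ (p %| size (mask m S))) -> dispersive S.
Proof.
move=> ge2_i [m0 [zs_m0 coprime_m0]].
have [//||m [nz_m zs_m]] := zero_sum_length_avoiding (ls := [:: size (mask m0 S)]).
  by rewrite /= coprime_m0.
rewrite /= orbF => neq_mod; exists m0, m; split=> //.
  by apply: contraNneq coprime_m0 => ->; rewrite dvdn0.
by apply: contraNneq neq_mod => ->.
Qed.

Section NoZeroSumOfLengthDivisibleByP.
Hypothesis coprime_zero_sums :
  forall m, mask m S != [::] -> zero_sum (mask m S) -> ~~ (p %| size (mask m S)).

Lemma leq_pred_prime : i <= p - 1.
Proof.
rewrite leqNgt; apply/negP => lt_p1_i.
have [||m [nz_m zs_m]] := zero_sum_length_avoiding (ls := iota 1 p.-1).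
- by rewrite size_iota -subn1.
- apply/allP => l; rewrite mem_iota add1n (prednK (prime_gt0 p_pr)) => /andP[l_gt0 lt_lp].
  by rewrite gtnNdvd.
apply/negP; rewrite negbK; apply/hasP; exists (size (mask m S) %% p).
  rewrite mem_iota add1n (prednK (prime_gt0 p_pr)) ltn_pmod ?(prime_gt0 p_pr) // andbT lt0n.
  exact: coprime_zero_sums.
by rewrite modn_mod.
Qed.

Lemma zero_sums_distinct_lengths : exists ms : seq bitseq,
  [/\ size ms = i, all (fun m => (mask m S != [::]) && zero_sum (mask m S)) ms
    & uniq [seq size (mask m S) | m <- ms]].
Proof.
suff grow k : k <= i -> exists ms : seq bitseq,
    [/\ size ms = k, all (fun m => (mask m S != [::]) && zero_sum (mask m S)) ms
      & uniq [seq size (mask m S) | m <- ms]] by exact: grow.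
elim: k => [|k IHk] lt_ki; first by exists [::].
have [ms [size_ms ms_zs uniq_ms]] := IHk (ltnW lt_ki).
have [||m [nz_m zs_m new_m]] := zero_sum_length_avoiding (ls := [seq size (mask m S) | m <- ms]).
- by rewrite size_map size_ms.
- apply/allP => _ /mapP[m' ms_m' ->].
  by case/andP: (allP ms_zs m' ms_m'); apply: coprime_zero_sums.
exists (m :: ms); split=> /=; rewrite ?size_ms ?nz_m ?zs_m ?ms_zs //.
rewrite uniq_ms andbT; apply: contra new_m => /mapP[m' ms_m' ->].
by apply/hasP; exists (size (mask m' S)); [apply: map_f | rewrite eqxx].
Qed.

End NoZeroSumOfLengthDivisibleByP.
End ZeroSumLengths.

Theorem corollary2p4 (p : nat) (G : finZmodType) (D : nat) (S : seq G) (i : nat) :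
  prime p -> p.-nat #|G| -> is_davenport G D ->
  (1 <= i)%N -> size S = (D + i - 1)%N ->
  (* (i) *)
  ((2 <= i)%N ->
     (exists m : bitseq, zero_sum (mask m S) /\ ~~ (p %| size (mask m S))) ->
     dispersive S)
  /\
  (* (ii) *)
  ((forall m : bitseq, mask m S != [::] -> zero_sum (mask m S) ->
       ~~ (p %| size (mask m S))) ->
     (i <= p - 1)%N /\
     exists ms : seq bitseq,
       [/\ size ms = i,
           all (fun m => (mask m S != [::]) && zero_sum (mask m S)) ms
         & uniq [seq size (mask m S) | m <- ms]]).
Proof.
move=> p_pr pG [_ [davD _]] _ size_S; split.
  exact: dispersive_of_coprime_zero_sum p_pr pG davD size_S.
move=> coprime_zero_sums; split.
  exact: leq_pred_prime p_pr pG davD size_S coprime_zero_sums.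
exact: zero_sums_distinct_lengths p_pr pG davD size_S coprime_zero_sums.
Qed.
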